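(* Let $p$ be a prime and define $a\in{\mathbb F}_p(x,y,z)^{{\mathbb N}}$ by $$a(n)=(x+y+z)^n-(x+y)^n-(x+z)^n-(y+z)^n+x^n+y^n+z^n.$$ Then ${\mathcal Z}(a)=\{p^n\mid n\in{\mathbb N}\}\cup\{p^n+p^m\mid n,m\in{\mathbb N}\}$.
   Context: ${\mathbb N}=\{0,1,2,\dots\}$, ${\mathbb F}_p(x,y,z)$ is the rational function field in three variables over the field with $p$ elements, and ${\mathcal Z}(a)=\{n\in{\mathbb N}\mid a(n)=0\}$. *)

From HB Require Import structures.
From mathcomp Require Import all_boot all_order all_algebra.
From mathcomp Require Import fraction.
From mathcomp Require Import mpoly.
Set Implicit Arguments. Unset Strict Implicit. Unset Printing Implicit Defensive.
Import GRing.Theory.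
Local Open Scope ring_scope.

Definition ratfun3 (p : nat) := {fraction {mpoly 'F_p[3]}}.

Definition vx (p : nat) : ratfun3 p := @FracField.tofrac {mpoly 'F_p[3]} 'X_0.
Definition vy (p : nat) : ratfun3 p := @FracField.tofrac {mpoly 'F_p[3]} 'X_1.
Definition vz (p : nat) : ratfun3 p := @FracField.tofrac {mpoly 'F_p[3]} 'X_2.

Definition seq_a (p : nat) (n : nat) : ratfun3 p :=
  let x := vx p in let y := vy p in let z := vz p in
  (x + y + z) ^+ n - (x + y) ^+ n - (x + z) ^+ n - (y + z) ^+ n
  + x ^+ n + y ^+ n + z ^+ n.

Definition zero_set (R : nzRingType) (a : nat -> R) : nat -> Prop :=
  fun n => a n = 0.

From HB Require Import structures.
From mathcomp Require Import all_boot all_order all_algebra.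
From mathcomp Require Import fraction.
From mathcomp Require Import mpoly.
From mathcomp Require Import ring.
Set Implicit Arguments. Unset Strict Implicit. Unset Printing Implicit Defensive.
Import GRing.Theory.
Local Open Scope ring_scope.

(* In characteristic p, t |-> t ^+ q is additive for q a power of p, so every
   term of a(q) and of a(q + q') splits into powers of x, y, z, and these
   cancel. Conversely, read a(n) in F_p[z][y][x]: for 0 < i < n and
   0 < j < n - i its coefficient of x^i y^j is C(n, i) C(n - i, j) z^(n-i-j),
   so a(n) = 0 makes p divide C(n, i) or C(n - i, j). Comparing coefficients
   of x^q in (x + 1)^(m q) = (x^q + 1)^m gives C(m q, q) = m (mod p), so
   neither binomial is divisible by p for i the p-part n_p of n and j the
   p-part of n - n_p; hence n = n_p or n - n_p is a power of p. *)

Definition cross_pow3 (R : nzRingType) (x y z : R) (n : nat) : R :=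
  (x + y + z) ^+ n - (x + y) ^+ n - (x + z) ^+ n - (y + z) ^+ n
  + x ^+ n + y ^+ n + z ^+ n.

Lemma seq_aE p n : seq_a p n = cross_pow3 (vx p) (vy p) (vz p) n.
Proof. by []. Qed.

Lemma cross_pow3_0 (R : nzRingType) (x y z : R) : cross_pow3 x y z 0 = 1.
Proof. by rewrite /cross_pow3 !expr0 !subrK. Qed.

Lemma rmorph_cross_pow3 (R S : nzRingType) (f : {rmorphism R -> S}) x y z n :
  f (cross_pow3 x y z n) = cross_pow3 (f x) (f y) (f z) n.
Proof. by rewrite /cross_pow3 !(rmorphD, rmorphN, rmorphXn). Qed.

Lemma pnat_pchar_expn (R : nzRingType) p k :
  p \in [pchar R] -> [pchar R].-nat (p ^ k)%N.
Proof.
move=> pR.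
by rewrite (eq_pnat _ (pcharf_eq pR)) pnatX pnat_id ?(pcharf_prime pR).
Qed.

Section CrossPowPchar.

Variables (R : comNzRingType) (p : nat) (x y z : R).
Hypothesis pR : p \in [pchar R].

Lemma cross_pow3_pchar_expn k : cross_pow3 x y z (p ^ k)%N = 0.
Proof.
by rewrite /cross_pow3 !(exprDn_pchar _ _ (pnat_pchar_expn k pR)); ring.
Qed.

Lemma cross_pow3_pchar_add_expn k m :
  cross_pow3 x y z (p ^ k + p ^ m)%N = 0.
Proof.
rewrite /cross_pow3 !exprD !(exprDn_pchar _ _ (pnat_pchar_expn k pR)).
by rewrite !(exprDn_pchar _ _ (pnat_pchar_expn m pR)); ring.
Qed.

End CrossPowPchar.

Lemma coef_XaddC_exp (R : comNzRingType) (c : R) n i :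
  (('X + c%:P) ^+ n)`_i = 'C(n, i)%:R * c ^+ (n - i).
Proof.
rewrite addrC exprDn coef_sum.
under eq_bigr => k _.
  rewrite -polyC_exp coefMn coefCM coefXn eq_sym.
  have -> : c ^+ (n - k) * (k == i :> nat)%:R *+ 'C(n, k) =
            if k == i :> nat then 'C(n, k)%:R * c ^+ (n - k) else 0.
    by case: eqP; rewrite ?mulr1 ?mulr0 ?mul0rn // mulr_natl.
  over.
rewrite -big_mkcond.
rewrite (big_ord1_eq _ (fun k => 'C(n, k)%:R * c ^+ (n - k))) ltnS.
by case: leqP => // /bin_small->; rewrite mul0r.
Qed.

Lemma coef_XaddC_exp_sub (R : comNzRingType) (c : R) n i : (0 < i < n)%N ->
  (('X + c%:P) ^+ n - 'X ^+ n - c%:P ^+ n)`_i = 'C(n, i)%:R * c ^+ (n - i).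
Proof.
case/andP=> i_gt0 lt_in.
rewrite !coefB coef_XaddC_exp -polyC_exp coefC coefXn.
by rewrite ltn_eqF // gtn_eqF // !subr0.
Qed.

Lemma coef_cross_pow3_XCC (R : comNzRingType) (y z : R) n i : (0 < i < n)%N ->
  (cross_pow3 'X y%:P z%:P n)`_i =
  'C(n, i)%:R * ((y + z) ^+ (n - i) - y ^+ (n - i) - z ^+ (n - i)).
Proof.
case/andP=> i_gt0 lt_in.
rewrite /cross_pow3 -(addrA 'X) -!polyCD !coefD !coefN !coef_XaddC_exp.
rewrite -!polyC_exp !coefC !coefXn gtn_eqF ?ltn_eqF // /=; ring.
Qed.

Lemma cross_pow3_XYZ_eq0_dvdn_bin (R : idomainType) p n i j :
  p \in [pchar R] ->
  cross_pow3 ('X : {poly {poly {poly R}}}) 'X%:P 'X%:P%:P n = 0 ->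
  (0 < i < n)%N -> (0 < j < n - i)%N ->
  (p %| 'C(n, i))%N \/ (p %| 'C(n - i, j))%N.
Proof.
move=> pR a0 lt_i lt_j.
have pR1 : p \in [pchar {poly R}] by rewrite pchar_poly.
have pR2 : p \in [pchar {poly {poly R}}] by rewrite pchar_poly.
have /eqP := congr1 (coefp i) a0; rewrite /= coef_cross_pow3_XCC // coef0.
rewrite mulf_eq0 -(dvdn_pcharf pR2) => /orP[|/eqP b0]; [by left | right].
have /eqP := congr1 (coefp j) b0; rewrite /= coef_XaddC_exp_sub // coef0.
by rewrite mulf_eq0 expf_eq0 polyX_eq0 andbF orbF -(dvdn_pcharf pR1).
Qed.

Lemma pchar_bin_mul_expn (R : comNzRingType) p m k : p \in [pchar R] ->
  'C(m * p ^ k, p ^ k)%:R = m%:R :> R.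
Proof.
move=> pR; set q := (p ^ k)%N.
have q_gt0 : (0 < q)%N by rewrite expn_gt0 prime_gt0 ?(pcharf_prime pR).
have pRX : p \in [pchar {poly R}] by rewrite pchar_poly.
have frob : ('X + 1%:P) ^+ (m * q) = ('X + 1%:P) ^+ m \Po 'X^q :> {poly R}.
  rewrite mulnC exprM exprDn_pchar ?pnat_pchar_expn // -polyC_exp expr1n.
  by rewrite rmorphXn /= comp_polyD comp_polyX comp_polyC.
have := congr1 (coefp q) frob.
rewrite /= coef_XaddC_exp coef_comp_poly_Xn // dvdnn divnn q_gt0.
by rewrite coef_XaddC_exp bin1 !expr1n !mulr1.
Qed.

Section BinomialPPart.

Local Open Scope nat_scope.

Lemma prime_dvdn_bin_mul_expn p m k : prime p ->
  (p %| 'C(m * p ^ k, p ^ k)) = (p %| m).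
Proof.
by move=> /pchar_Fp pF; rewrite !(dvdn_pcharf pF) pchar_bin_mul_expn.
Qed.

Lemma prime_ndvd_bin_p_part p n : prime p -> 0 < n -> ~~ (p %| 'C(n, n`_p)).
Proof.
move=> p_pr n_gt0; have [m p'm n_eq] := pfactor_coprime p_pr n_gt0.
by rewrite p_part {1}n_eq prime_dvdn_bin_mul_expn // -prime_coprime.
Qed.

Lemma pfactor_or_sum2_of_dvdn_bin p n : prime p -> 0 < n ->
  (forall i j, 0 < i < n -> 0 < j < n - i ->
     (p %| 'C(n, i)) \/ (p %| 'C(n - i, j))) ->
  (exists k, n = p ^ k) \/ (exists k m, n = p ^ k + p ^ m).
Proof.
move=> p_pr n_gt0 dvdn_bin.
have le_p_part m : 0 < m -> m`_p <= m.
  by move=> m_gt0; apply: dvdn_leq (dvdn_part _ _).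
move: (le_p_part n n_gt0); rewrite leq_eqVlt => /predU1P[n_p | lt_n].
  by left; exists (logn p n); rewrite -p_part n_p.
set r := n - n`_p; have r_gt0 : 0 < r by rewrite subn_gt0.
move: (le_p_part r r_gt0); rewrite leq_eqVlt => /predU1P[r_p | lt_r].
  right; exists (logn p n), (logn p r).
  by rewrite -!(p_part p) r_p subnKC // ltnW.
have [] := dvdn_bin n`_p r`_p; rewrite ?part_gt0 ?lt_n ?lt_r //.
  by rewrite (negPf (prime_ndvd_bin_p_part p_pr n_gt0)).
by rewrite (negPf (prime_ndvd_bin_p_part p_pr r_gt0)).
Qed.

End BinomialPPart.

Lemma pchar_ratfun3 p : prime p -> p \in [pchar ratfun3 p].
Proof.
move=> /pchar_Fp pF.
exact: (rmorph_pchar (@tofrac _) (rmorph_pchar (@mpolyC 3 _) pF)).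
Qed.

Lemma seq_a_eq0_XYZ p n : seq_a p n = 0 ->
  cross_pow3 ('X : {poly {poly {poly 'F_p}}}) 'X%:P 'X%:P%:P n = 0.
Proof.
rewrite seq_aE -rmorph_cross_pow3 => /eqP; rewrite tofrac_eq0 => /eqP a0.
pose h (i : 'I_3) : {poly {poly {poly 'F_p}}} := [:: 'X; 'X%:P; 'X%:P%:P]`_i.
have := congr1 (mmap (polyC \o polyC \o (@polyC 'F_p)) h) a0.
by rewrite rmorph_cross_pow3 rmorph0 /= !mmapX !mmap1U.
Qed.

Theorem proposition3p2 (p : nat) (hp : prime p) :
  forall n : nat,
    zero_set (seq_a p) n <->
    ((exists k : nat, n = (p ^ k)%N) \/
     (exists k m : nat, n = (p ^ k + p ^ m)%N)).
Proof.
move=> n; rewrite /zero_set; split; last first.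
  have pF := pchar_ratfun3 hp; rewrite seq_aE.
  by case=> [[k ->] | [k [m ->]]];
    [exact: cross_pow3_pchar_expn | exact: cross_pow3_pchar_add_expn].
move=> a0; have n_gt0 : (0 < n)%N.
  by case: n a0 => // /eqP; rewrite seq_aE cross_pow3_0 oner_eq0.
apply: (pfactor_or_sum2_of_dvdn_bin hp n_gt0) => i j.
exact: cross_pow3_XYZ_eq0_dvdn_bin (pchar_Fp hp) (seq_a_eq0_XYZ a0).
Qed.
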